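(* Let $N$ be a nontrivial normal subgroup of $G_2$. If $\phi(N)$ is trivial, then $N=K$.
   Context: The $2\times2\times2$ Rubik's cube consists of 8 corner cubelets, each carrying 3 colored stickers. Corner positions are numbered 1 = top-front-left, 2 = top-front-right, 3 = top-back-left, 4 = top-back-right, 5 = bottom-front-left, 6 = bottom-front-right, 7 = bottom-back-left, 8 = bottom-back-right. $G_2$ is the subgroup of the symmetric group on the 24 stickers generated by the six moves $u,d,f,b,l,r$ rotating respectively the top, bottom, front, back, left, right layer of four cubelets by $90^\circ$ clockwise as seen from outside facing that face. $\phi:G_2\to S_8$ records the permutation of corner positions, and $K=\ker\phi$. *)

From mathcomp Require Import all_boot all_fingroup.
Set Implicit Arguments. Unset Strict Implicit. Unset Printing Implicit Defensive.

(* Right-handed frame: axis 0 = x (true = Right, false = Left),        *)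
(*                     axis 1 = y (true = Up/top, false = Down/bottom),*)
(*                     axis 2 = z (true = Front, false = Back).        *)
(* A sticker (location) is a corner position together with the axis of *)
(* the face it lies on (the sign of that face is the corner's          *)
(* coordinate along that axis): 8 * 3 = 24 stickers.                   *)

Definition corner := (bool * bool * bool)%type.
Definition sticker := (corner * 'I_3)%type.

Definition corner1 : corner := (false, true, true).
Definition corner2 : corner := (true, true, true).
Definition corner3 : corner := (false, true, false).
Definition corner4 : corner := (true, true, false).
Definition corner5 : corner := (false, false, true).
Definition corner6 : corner := (true, false, true).
Definition corner7 : corner := (false, false, false).
Definition corner8 : corner := (true, false, false).

Definition coord (c : corner) (m : 'I_3) : bool :=
  let: (x, y, z) := c in
  if val m == 0 then x else if val m == 1 then y else z.

Definition axis_x : 'I_3 := @Ordinal 3 0 isT.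
Definition axis_y : 'I_3 := @Ordinal 3 1 isT.
Definition axis_z : 'I_3 := @Ordinal 3 2 isT.

Definition mkcorner (f : 'I_3 -> bool) : corner :=
  (f axis_x, f axis_y, f axis_z).

Definition nxt (k : 'I_3) : 'I_3 :=
  match val k with 0 => axis_y | 1 => axis_z | _ => axis_x end.

(* The quarter turn, clockwise as seen from outside, of the layer of   *)
(* the four cubelets whose coordinate along axis k equals s.  Writing  *)
(* (k, i, j) for the cyclic order of the axes, clockwise seen from the *)
(* outside of the face with outward normal +e_k is the rotation by     *)
(* -90 degrees about e_k:  new_i = old_j, new_j = - old_i; for the     *)
(* face with outward normal -e_k it is new_i = - old_j, new_j = old_i. *)
Definition turn_fun (k : 'I_3) (s : bool) (st : sticker) : sticker :=
  let: (c, a) := st in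
  if coord c k != s then st else
  let i := nxt k in let j := nxt i in
  let c' := mkcorner (fun m =>
      if m == i then (if s then coord c j else ~~ coord c j)
      else if m == j then (if s then ~~ coord c i else coord c i)
      else coord c m) in
  let a' := if a == i then j else if a == j then i else a in
  (c', a').

Lemma turn_fun4 k s x :
  turn_fun k s (turn_fun k s (turn_fun k s (turn_fun k s x))) == x.
Proof.
case: x => [[[x y] z] [a Ha]].
case: k => [[|[|[|k]]] Hk] //;
case: a Ha => [|[|[|a]]] Ha //; by case: x; case: y; case: z; case: s.
Qed.

Lemma turn_fun_inj k s : injective (turn_fun k s).
Proof.
apply: (can_inj (g := fun x => turn_fun k s (turn_fun k s (turn_fun k s x)))).
by move=> x; apply/eqP; apply: turn_fun4.
Qed.

Definition turn k s : {perm sticker} := perm (@turn_fun_inj k s).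


Definition mv_u := turn axis_y true.
Definition mv_d := turn axis_y false.
Definition mv_f := turn axis_z true.
Definition mv_b := turn axis_z false.
Definition mv_l := turn axis_x false.
Definition mv_r := turn axis_x true.

Definition G2 : {group {perm sticker}} :=
  <<[set mv_u; mv_d; mv_f; mv_b; mv_l; mv_r]>>%G.

(* phi : permutation of the corner positions induced by g: the cubelet *)
(* at position c is sent to position phi g c (all three stickers of a  *)
(* cubelet move together for g in G2, so the choice of sticker (c, 0)  *)
(* is immaterial there).                                               *)
Definition phi (g : {perm sticker}) : {ffun corner -> corner} :=
  [ffun c => (g (c, ord0)).1].

Definition phi_id : {ffun corner -> corner} := [ffun c => c].

Definition K : {set {perm sticker}} := [set g in G2 | phi g == phi_id].

From mathcomp Require Import all_boot all_fingroup.
From mathcomp Require Import zify.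
Set Implicit Arguments. Unset Strict Implicit. Unset Printing Implicit Defensive.

(* Every move commutes with the permutation [rho] turning each cubelet in place
   by a third of a turn, so an element of G2 is determined by its corner
   permutation and the twist (in Z/3) it gives each cubelet, and the twists of
   a move sum to 0 mod 3.  Hence K is the group of pure twists with zero total
   twist, generated by the pair twists (+1 at corner k, -1 at corner 1).  A
   nontrivial g in N has a twist vector t with t k <> t 1 for some k; combining
   g with its conjugate by a move that transposes corners 1 and k and taking a
   power isolates the pair twist at k; the same step applied to its conjugate
   by a move transposing corners 1 and j gives the pair twist at j. *)

Definition corner_parity (c : corner) : bool := let: (x, y, z) := c in x (+) y (+) z.

(* The axis shift runs backwards at odd corners because the frame of the three
   faces at a corner alternates handedness; this makes every face turn commute
   with [rho]. *)
Definition rho_fun (x : sticker) : sticker :=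
  (x.1, @Ordinal 3 ((x.2 + (if corner_parity x.1 then 1 else 2)) %% 3) (@ltn_pmod _ 3 isT)).

Lemma rho_fun3 x : rho_fun (rho_fun (rho_fun x)) = x.
Proof. by case: x => [[[x y] z] [[|[|[|a]]] Ha]] //; apply/eqP; case: x; case: y; case: z. Qed.

Lemma rho_fun_inj : injective rho_fun.
Proof. exact: can_inj (fun x => rho_fun (rho_fun x)) rho_fun3. Qed.

Definition rho : {perm sticker} := perm rho_fun_inj.

Lemma turn_fun_rho k s x : turn_fun k s (rho_fun x) = rho_fun (turn_fun k s x).
Proof.
case: x => [[[x y] z] [[|[|[|a]]] Ha]] //; case: k => [[|[|[|k]]] Hk] //; apply/eqP;
  by case: x; case: y; case: z; case: s.
Qed.

Definition ori (x : sticker) : nat :=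
  if corner_parity x.1 then val x.2 else (2 * val x.2) %% 3.

Lemma ori_lt3 x : ori x < 3.
Proof. by rewrite /ori; case: ifP => _; [apply: ltn_ord | apply: ltn_pmod]. Qed.

Lemma ori_ord0 c : ori (c, ord0) = 0.
Proof. by rewrite /ori; case: ifP. Qed.

Lemma rho_corner x : (rho x).1 = x.1.
Proof. by rewrite permE. Qed.

Lemma rho_ori x : ori (rho x) = (ori x).+1 %% 3.
Proof.
by rewrite permE; case: x => [[[x y] z] [[|[|[|a]]] Ha]] //; case: x; case: y; case: z.
Qed.

Local Open Scope group_scope.

Lemma rho3 : rho ^+ 3 = 1.
Proof. by apply/permP => x; rewrite permX perm1 /= !permE rho_fun3. Qed.

Lemma rhoX_mod3 n : rho ^+ (n %% 3) = rho ^+ n.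
Proof. exact: expg_mod rho3. Qed.

Lemma rhoX_corner n x : ((rho ^+ n) x).1 = x.1.
Proof. by rewrite permX; elim: n => //= n IHn; rewrite rho_corner. Qed.

Lemma rhoX_ori n x : ori ((rho ^+ n) x) = (ori x + n) %% 3.
Proof.
rewrite permX; elim: n => /= [|n IHn]; first by rewrite addn0 modn_small ?ori_lt3.
by rewrite rho_ori IHn -addn1 modnDml addn1 addnS.
Qed.

Lemma rhoX_ori_ord0 x : (rho ^+ ori x) (x.1, ord0) = x.
Proof.
rewrite permX; case: x => [[[x y] z] [[|[|[|a]]] Ha]] //; apply/eqP;
  by case: x; case: y; case: z; rewrite /= ?permE.
Qed.

Lemma eq_sticker x y : x.1 = y.1 -> ori x = ori y -> x = y.
Proof. by move=> eq1 eq_ori; rewrite -[x]rhoX_ori_ord0 -[y]rhoX_ori_ord0 eq1 eq_ori. Qed.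

Lemma turn_cent_rho k s : turn k s \in 'C[rho].
Proof. by apply/cent1P/permP => x; rewrite !permM !permE turn_fun_rho. Qed.

Lemma G2_cent_rho : G2 \subset 'C[rho].
Proof. by rewrite gen_subG !subUset !sub1set !turn_cent_rho. Qed.

Definition twist (h : {perm sticker}) (c : corner) : nat := ori (h (c, ord0)).

Definition total_twist (h : {perm sticker}) : nat := \sum_(c : corner) twist h c.

Section CentralizerOfRho.

Variable h : {perm sticker}.
Hypothesis h_cent : h \in 'C[rho].

Lemma cent_rhoX n x : h ((rho ^+ n) x) = (rho ^+ n) (h x).
Proof. by rewrite -!permM (commuteX n (cent1P h_cent)). Qed.

Lemma cent_ord0 x : h x = (rho ^+ ori x) (h (x.1, ord0)).
Proof. by rewrite -cent_rhoX rhoX_ori_ord0. Qed.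

Lemma cent_corner x : (h x).1 = phi h x.1.
Proof. by rewrite cent_ord0 rhoX_corner ffunE. Qed.

Lemma cent_ori x : ori (h x) = (ori x + twist h x.1) %% 3.
Proof. by rewrite cent_ord0 rhoX_ori addnC. Qed.

End CentralizerOfRho.

Lemma cent_phi_inj h : h \in 'C[rho] -> injective (phi h).
Proof.
move=> h_cent; have hV_cent : h^-1 \in 'C[rho] by rewrite groupV.
by apply: (can_inj (g := phi h^-1)) => c; rewrite [phi h c]ffunE -cent_corner // permK.
Qed.

Lemma twistM h1 h2 c : h2 \in 'C[rho] ->
  twist (h1 * h2) c = (twist h1 c + twist h2 (phi h1 c)) %% 3.
Proof. by move=> h2_cent; rewrite /twist permM cent_ori // ffunE. Qed.

Lemma total_twistM h1 h2 : h1 \in 'C[rho] -> h2 \in 'C[rho] ->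
  total_twist (h1 * h2) = total_twist h1 + total_twist h2 %[mod 3].
Proof.
move=> h1_cent h2_cent; rewrite /total_twist.
under eq_bigr do rewrite twistM //.
rewrite modn_summ big_split /=.
by rewrite [X in _ = _ + X %[mod 3]](reindex_inj (cent_phi_inj h1_cent)).
Qed.

Definition balanced : {set {perm sticker}} :=
  [set h in 'C[rho] | total_twist h %% 3 == 0].

Lemma balanced_group_set : group_set balanced.
Proof.
apply/group_setP; split.
  by rewrite inE group1 /total_twist big1 // => c _; rewrite /twist perm1 ori_ord0.
move=> h1 h2 /setIdP[h1_cent /eqP tw1] /setIdP[h2_cent /eqP tw2].
by rewrite inE groupM //= total_twistM // -modnDm tw1 tw2.
Qed.

Canonical balanced_group := Group balanced_group_set.

Lemma sum_corner (F : corner -> nat) :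
  \sum_(c : corner) F c = \sum_(x : bool) \sum_(y : bool) \sum_(z : bool) F (x, y, z).
Proof. by rewrite !pair_bigA; apply: eq_bigr => [[[x y] z]]. Qed.

Lemma turn_balanced k s : turn k s \in balanced.
Proof.
rewrite inE turn_cent_rho /total_twist sum_corner !big_bool.
by case: k => [[|[|[|k]]] Hk] //; case: s; rewrite /twist !permE.
Qed.

Lemma G2_balanced : G2 \subset balanced.
Proof. by rewrite gen_subG !subUset !sub1set !turn_balanced. Qed.

Definition twist_perm_fun (t : corner -> nat) (x : sticker) : sticker := (rho ^+ t x.1) x.

Lemma twist_perm_fun_inj t : injective (twist_perm_fun t).
Proof.
move=> x y eq_xy; have := congr1 fst eq_xy; rewrite /= !rhoX_corner => eq1.
by move: eq_xy; rewrite /twist_perm_fun eq1 => /perm_inj.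
Qed.

Definition twist_perm t : {perm sticker} := perm (@twist_perm_fun_inj t).

Lemma twist_permE t x : twist_perm t x = (rho ^+ t x.1) x.
Proof. by rewrite permE. Qed.

Lemma eq_twist_perm t t' : (forall c, t c = t' c %[mod 3]) -> twist_perm t = twist_perm t'.
Proof. by move=> eq_t; apply/permP => x; rewrite !twist_permE -rhoX_mod3 eq_t rhoX_mod3. Qed.

Lemma twist_perm0 : twist_perm (fun=> 0) = 1.
Proof. by apply/permP => x; rewrite twist_permE perm1. Qed.

Lemma twist_permM t t' : twist_perm t * twist_perm t' = twist_perm (fun c => t c + t' c).
Proof. by apply/permP => x; rewrite permM !twist_permE rhoX_corner expgD permM. Qed.

Lemma twist_permX t n : twist_perm t ^+ n = twist_perm (fun c => n * t c)%N.
Proof.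
elim: n => [|n IHn]; first by rewrite expg0 -twist_perm0.
by rewrite expgS IHn twist_permM; apply: eq_twist_perm => c; rewrite mulSn.
Qed.

Lemma prod_twist_perm (I : Type) (r : seq I) (P : pred I) (t : I -> corner -> nat) :
  \prod_(i <- r | P i) twist_perm (t i) = twist_perm (fun c => \sum_(i <- r | P i) t i c).
Proof.
elim: r => [|i r IHr].
  by rewrite big_nil -twist_perm0; apply: eq_twist_perm => c; rewrite big_nil.
rewrite big_cons IHr; case: ifP => Pi; rewrite ?twist_permM;
  by apply: eq_twist_perm => c; rewrite big_cons Pi.
Qed.

Lemma twist_permJ t h : h \in 'C[rho] -> twist_perm t ^ h = twist_perm (t \o phi h^-1).
Proof.
move=> h_cent; have hV_cent : h^-1 \in 'C[rho] by rewrite groupV.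
apply/permP => x; rewrite conjgE !permM twist_permE cent_rhoX // permKV.
by rewrite twist_permE cent_corner.
Qed.

Lemma K_balanced : K \subset balanced.
Proof. by apply: subset_trans G2_balanced; apply/subsetP => g /setIdP[]. Qed.

Lemma K_twist_perm g : g \in K -> g = twist_perm (twist g).
Proof.
move=> gK; have /setIdP[gG /eqP phi_g] := gK.
have /setIdP[g_cent _] := subsetP K_balanced g gK.
apply/permP => x; apply: eq_sticker.
  by rewrite cent_corner // phi_g ffunE twist_permE rhoX_corner.
by rewrite cent_ori // twist_permE rhoX_ori.
Qed.

Lemma K_twist_nonconstant g : g \in K -> g != 1 ->
  exists k, twist g k != twist g corner1 %[mod 3].
Proof.
move=> gK ntg; apply/existsP; apply: contraNT ntg => /existsPn const.
have {}const c : twist g c = twist g corner1 %[mod 3] by apply/eqP/negbNE/const.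
have /setIdP[_ /eqP total0] := subsetP K_balanced g gK.
have twist1_0 : twist g corner1 = 0 %[mod 3].
  move: total0; rewrite /total_twist -modn_summ.
  under eq_bigr do rewrite const.
  by rewrite sum_nat_const !card_prod card_bool; lia.
apply/eqP; rewrite (K_twist_perm gK) -twist_perm0; apply: eq_twist_perm => c.
by rewrite const twist1_0.
Qed.

Definition pair_twist (k c : corner) : nat :=
  (if c == corner1 then 2 else if c == k then 1 else 0)%N.

Lemma K_prod_pair_twist g : g \in K ->
  g = \prod_(k | k != corner1) twist_perm (pair_twist k) ^+ twist g k.
Proof.
move=> gK; have /setIdP[_ /eqP total0] := subsetP K_balanced g gK.
rewrite {1}(K_twist_perm gK); under eq_bigr do rewrite twist_permX.
rewrite prod_twist_perm; apply: eq_twist_perm => c.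
case: (eqVneq c corner1) => [->|c_ne1].
  under eq_bigr do rewrite /pair_twist eqxx.
  move: total0; rewrite -big_distrl /total_twist (bigD1 corner1) //=; lia.
rewrite (bigD1 c) //= big1 => [|k /andP[_ k_ne_c]]; rewrite /pair_twist (negPf c_ne1).
  by rewrite eqxx muln1 addn0.
by rewrite eq_sym (negPf k_ne_c) muln0.
Qed.

(* Move sequences whose corner permutation is the transposition of corner 1
   and [k], found by computer search; their effect on orientations is
   irrelevant, since conjugating a pure twist only permutes its twist vector. *)
Definition swap_move (k : corner) : {perm sticker} :=
  match k with
  | (true, true, true) => mv_u * mv_l * mv_f * mv_d * mv_b
  | (false, true, false) => mv_u * mv_f * mv_d * mv_b * mv_l
  | (true, true, false) => mv_u * mv_f * mv_f * mv_l * mv_f * mv_f * mv_d * mv_f * mv_b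
  | (false, false, true) => mv_f * mv_u * mv_l * mv_b * mv_r
  | (true, false, true) => mv_u * mv_u * mv_u * mv_f * mv_u * mv_f * mv_r * mv_b * mv_d
  | (false, false, false) => mv_u * mv_u * mv_f * mv_l * mv_l * mv_d * mv_b * mv_b * mv_r
  | (true, false, false) => mv_u * mv_u * mv_f * mv_l * mv_b * mv_u * mv_r * mv_u * mv_u
  | _ => 1
  end.

Lemma swap_move_G2 k : swap_move k \in G2.
Proof.
case: k => [[[] []] []]; rewrite /= ?group1 //;
  by do !apply: groupM; apply: mem_gen; rewrite !inE eqxx ?orbT.
Qed.

Lemma phi_swap_move k c : phi (swap_move k) c = tperm corner1 k c.
Proof.
by case: k => [[[] []] []]; case: c => [[[] []] []];
  rewrite ffunE /= ?perm1 ?permM !permE.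
Qed.

Lemma twist_permJ_swap t k :
  twist_perm t ^ (swap_move k)^-1 = twist_perm (t \o tperm corner1 k).
Proof.
rewrite twist_permJ ?groupV ?(subsetP G2_cent_rho) ?swap_move_G2 // invgK.
by apply: eq_twist_perm => c; rewrite /= phi_swap_move.
Qed.

Section NormalSubgroupOfK.

Variable N : {group {perm sticker}}.
Hypotheses (nNG : N <| G2) (sNK : N \subset K).

Lemma twist_perm_swap_mem t k :
  twist_perm t \in N -> twist_perm (t \o tperm corner1 k) \in N.
Proof.
move=> tN; rewrite -twist_permJ_swap memJ_norm //.
by rewrite groupV (subsetP (normal_norm nNG)) ?swap_move_G2.
Qed.

Lemma pair_twist_mem t k : twist_perm t \in N -> t k != t corner1 %[mod 3] ->
  twist_perm (pair_twist k) \in N.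
Proof.
(* [t c + 2 t (tperm corner1 k c)] vanishes off [corner1] and [k], where it is
   [+/- (t corner1 - t k)], a unit mod 3; the right power rescales it to [pair_twist k]. *)
move=> tN /eqP tk_ne.
have k_ne1 : k != corner1 by apply: contra_not_neq tk_ne => ->.
have := groupM tN (groupX 2 (twist_perm_swap_mem k tN)).
rewrite twist_permX twist_permM.
move=> /(groupX (if (t corner1 + 2 * t k) %% 3 == 1 then 2 else 1)%N).
rewrite twist_permX; congr (_ \in N); apply: eq_twist_perm => c /=.
rewrite /pair_twist; case: tpermP => [->|->|/eqP c_ne1 /eqP c_ne_k].
- by rewrite eqxx; case: ifP => /eqP; lia.
- by rewrite (negPf k_ne1) eqxx; case: ifP => /eqP; lia.
- by rewrite (negPf c_ne1) (negPf c_ne_k); lia.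
Qed.

Lemma K_sub_normal : N :!=: 1 -> K \subset N.
Proof.
case/trivgPn=> h hN nth; have hK := subsetP sNK h hN.
have [k tk_ne] := K_twist_nonconstant hK nth.
have kN : twist_perm (pair_twist k) \in N by apply: pair_twist_mem tk_ne; rewrite -K_twist_perm.
apply/subsetP => g /K_prod_pair_twist ->; apply: group_prod => j j_ne1; apply: groupX.
have [-> // | j_ne_k] := eqVneq j k.
apply: pair_twist_mem (twist_perm_swap_mem j kN) _.
by rewrite /= tpermR tpermL /pair_twist eqxx (negPf j_ne1) (negPf j_ne_k).
Qed.

End NormalSubgroupOfK.

Theorem proposition2p7 (N : {group {perm sticker}}) :
  (N <| G2)%g -> (N :!=: 1)%g ->
  (forall g, g \in N -> phi g = phi_id) ->
  (N :=: K)%g.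
Proof.
move=> nNG ntN phiN.
have sNK : N \subset K.
  by apply/subsetP => g gN; rewrite inE (subsetP (normal_sub nNG)) // phiN /=.
by apply/eqP; rewrite eqEsubset sNK K_sub_normal.
Qed.
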